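(* ${\bf K^\boxdot}$ is sound and strongly complete with respect to the class of all bimodal frames: for every $\Gamma\subseteq\mathcal{L}(\boxdot)$ and $\phi\in\mathcal{L}(\boxdot)$, $\Gamma\vdash_{{\bf K^\boxdot}}\phi$ iff $\phi$ is true at every state of every bimodal model at which all formulas of $\Gamma$ are true.
   Context: Fix a nonempty set $\mathbf{P}$ of propositional variables. A bimodal model is $\langle S,R_1,R_2,V\rangle$ with $S$ nonempty, $R_1,R_2\subseteq S\times S$, $V:\mathbf{P}\to\mathcal{P}(S)$. $\mathcal{L}(\boxdot):\ \phi::=p\mid\neg\phi\mid(\phi\wedge\phi)\mid\boxdot\phi$ (other connectives, $\top,\bot$ abbreviations). Truth: $\mathcal{M},s\vDash\boxdot\phi$ iff for all $t,u$ with $sR_1t$ and $sR_2u$, ($\mathcal{M},t\vDash\phi\iff\mathcal{M},u\vDash\phi$); atoms and Booleans as usual. ${\bf K^\boxdot}$ has axioms: all instances of propositional tautologies; $\boxdot\top$; $\boxdot\phi\leftrightarrow\boxdot\neg\phi$; $\boxdot\phi\wedge\boxdot\psi\to\boxdot(\phi\wedge\psi)$; $\boxdot\phi\to\boxdot(\phi\vee\psi)\vee\boxdot(\neg\phi\vee\chi)$; and rules: modus ponens and RE: from $\phi\leftrightarrow\psi$ infer $\boxdot\phi\leftrightarrow\boxdot\psi$. *)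

From Stdlib Require Import List.
Import ListNotations.
Set Implicit Arguments.

Section Syntax.
Variable P : Type.

Inductive form : Type :=
| Atom : P -> form
| Neg : form -> form
| And : form -> form -> form
| Dot : form -> form.

Definition Or (a b : form) := Neg (And (Neg a) (Neg b)).
Definition Imp (a b : form) := Neg (And a (Neg b)).
Definition Iff (a b : form) := And (Imp a b) (Imp b a).
Definition Top (p : P) := Neg (And (Atom p) (Neg (Atom p))).

(* propositional tautologies: true under every Boolean valuation treating
   atoms and boxdot-formulas as propositional letters *)
Fixpoint peval (v : form -> bool) (f : form) : bool :=
  match f with
  | Atom _ => v f
  | Neg a => negb (peval v a)
  | And a b => andb (peval v a) (peval v b)
  | Dot _ => v f
  end.

Definition tautology (f : form) : Prop := forall v, peval v f = true.

Inductive thm : form -> Prop :=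
| AxTaut : forall f, tautology f -> thm f
| AxTop : forall p, thm (Dot (Top p))
| AxNeg : forall f, thm (Iff (Dot f) (Dot (Neg f)))
| AxAnd : forall f g, thm (Imp (And (Dot f) (Dot g)) (Dot (And f g)))
| AxOr : forall f g h,
    thm (Imp (Dot f) (Or (Dot (Or f g)) (Dot (Or (Neg f) h))))
| MP : forall f g, thm (Imp f g) -> thm f -> thm g
| RE : forall f g, thm (Iff f g) -> thm (Iff (Dot f) (Dot g)).

Fixpoint imps (l : list form) (f : form) : form :=
  match l with
  | [] => f
  | x :: l' => Imp x (imps l' f)
  end.

Definition deriv (Gamma : form -> Prop) (f : form) : Prop :=
  exists l : list form, (forall x, In x l -> Gamma x) /\ thm (imps l f).

End Syntax.

Arguments Atom {P}.

(* bimodal models <S, R1, R2, V>; S nonempty is witnessed by a state *)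
Record model (P : Type) : Type := Model {
  st : Type;
  R1 : st -> st -> Prop;
  R2 : st -> st -> Prop;
  V : P -> st -> Prop
}.

Fixpoint sat (P : Type) (M : model P) (s : st M) (f : form P) {struct f} : Prop :=
  match f with
  | Atom p => V M p s
  | Neg a => ~ sat M s a
  | And a b => sat M s a /\ sat M s b
  | Dot a => forall t u, R1 M s t -> R2 M s u -> (sat M t a <-> sat M u a)
  end.

From Stdlib Require Import List Classical ClassicalEpsilon FunctionalExtensionality PropExtensionality Bool.
Import ListNotations.

(* Soundness is an induction on theorems: tautologies are valid because
   [sat] is a Boolean valuation of formulas, and each boxdot axiom and the
   rule RE are checked directly against the "both successors agree" clause.

   Completeness is a canonical-model argument.  (1) A Lindenbaum lemma,
   proved for an arbitrary property of finite lists by a Zermelo-style tower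
   construction (no enumeration of the language is available, since the set
   of atoms is arbitrary), extends every consistent set to a maximal one.
   (2) Derivability from a set is closed under tautological consequence and
   satisfies the deduction theorem.  (3) For a maximal consistent set w, the
   "core" of w is the set of psi such that boxdot psi and boxdot (psi \/ chi)
   lie in w for every chi with ~ boxdot chi in w; it is deductively closed.
   (4) In the canonical model both relations send w to every maximal set
   containing the core of w (provided some ~ boxdot chi is in w), and the
   truth lemma holds.  A set Gamma not deriving phi extends with ~ phi to a
   maximal set, at which Gamma holds and phi fails. *)

Definition subset {X : Type} (A B : X -> Prop) : Prop := forall x, A x -> B x.
Definition insert {X : Type} (S : X -> Prop) (x : X) : X -> Prop := fun y => S y \/ y = x.

Lemma set_ext {X : Type} {A B : X -> Prop} : subset A B -> subset B A -> A = B.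
Proof.
  intros hAB hBA. apply functional_extensionality; intro x.
  apply propositional_extensionality; split; auto.
Qed.

(* The smallest family of sets containing D0 and closed under an inflationary
   map [next] and under unions of subfamilies; it is a chain. *)
Section Tower.
Variables (X : Type) (D0 : X -> Prop) (next : (X -> Prop) -> X -> Prop).
Hypothesis next_inc : forall S, subset S (next S).

Definition bigunion (F : (X -> Prop) -> Prop) : X -> Prop :=
  fun x => D0 x \/ exists S, F S /\ S x.

Inductive tower : (X -> Prop) -> Prop :=
| tower_base : tower D0
| tower_next : forall S, tower S -> tower (next S)
| tower_union : forall F, (forall S, F S -> tower S) -> tower (bigunion F).

Lemma tower_base_sub {S} : tower S -> subset D0 S.
Proof.
  induction 1 as [|S _ IH|F _ IH]; intros x hx.
  - exact hx.
  - apply next_inc, IH, hx.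
  - left; exact hx.
Qed.

Definition extreme (C : X -> Prop) : Prop :=
  forall B, tower B -> subset B C -> ~ subset C B -> subset (next B) C.

Lemma extreme_split {C B} : tower C -> extreme C -> tower B ->
  subset B C \/ subset (next C) B.
Proof.
  intros hC extC hB. induction hB as [|B hB IH|F hF IH].
  - left; apply (tower_base_sub hC).
  - destruct IH as [hBC|hCB].
    + destruct (classic (subset C B)) as [hCB|hCB].
      * right. rewrite (set_ext hBC hCB). intros x hx; exact hx.
      * left. apply extC; auto.
    + right. intros x hx. apply next_inc, hCB, hx.
  - destruct (classic (exists S, F S /\ subset (next C) S)) as [[S [hS hCS]]|hno].
    + right. intros x hx. right. exists S; auto.
    + left. intros x [hx|[S [hS hx]]].
      * apply (tower_base_sub hC), hx.
      * destruct (IH S hS) as [hSC|hCS]; [apply hSC, hx|].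
        exfalso; apply hno; exists S; auto.
Qed.

Lemma tower_extreme {C} : tower C -> extreme C.
Proof.
  induction 1 as [|C hC IH|F hF IH]; intros B hB hBC hCB.
  - exfalso. apply hCB, (tower_base_sub hB).
  - destruct (extreme_split hC IH hB) as [hBC'|hCB']; [|exfalso; apply hCB, hCB'].
    destruct (classic (subset C B)) as [hCB'|hCB'].
    + rewrite (set_ext hBC' hCB'). intros x hx; exact hx.
    + intros x hx. apply next_inc, (IH B hB hBC' hCB' x hx).
  - destruct (classic (exists S, F S /\ ~ subset S B)) as [[S [hS hSB]]|hno].
    + destruct (extreme_split (hF S hS) (IH S hS) hB) as [hBS|hSB'].
      * intros x hx. right. exists S. split; [exact hS|]. apply (IH S hS B hB hBS hSB x hx).
      * exfalso. apply hSB. intros x hx. apply hSB', next_inc, hx.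
    + exfalso. apply hCB. intros x [hx|[S [hS hx]]].
      * apply (tower_base_sub hB), hx.
      * apply NNPP; intro hxB. apply hno. exists S. split; [exact hS|].
        intro hSB. apply hxB, hSB, hx.
Qed.

Lemma tower_chain {A B} : tower A -> tower B -> subset A B \/ subset B A.
Proof.
  intros hA hB. destruct (extreme_split hA (tower_extreme hA) hB) as [h|h].
  - right; exact h.
  - left; intros x hx; apply h, next_inc, hx.
Qed.

(* A finite list inside the union of a subfamily of the tower lies inside
   D0 or inside a single member, because the tower is a chain. *)
Lemma list_in_member {F} (l : list X) : (forall S, F S -> tower S) ->
  (forall x, In x l -> bigunion F x) ->
  exists T, (T = D0 \/ F T) /\ (forall x, In x l -> T x).
Proof.
  intro hF. induction l as [|a l IH]; intro hl.
  - exists D0. split; [left; reflexivity | intros x []].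
  - destruct IH as [T [hT hlT]]; [intros x hx; apply hl; right; exact hx|].
    assert (tT : tower T) by (destruct hT as [->|hT]; [constructor | apply hF, hT]).
    destruct (hl a (or_introl eq_refl)) as [ha|[S [hS ha]]].
    + exists T. split; [exact hT|].
      intros x [<-|hx]; [apply (tower_base_sub tT), ha | apply hlT, hx].
    + destruct (tower_chain tT (hF S hS)) as [hTS|hST].
      * exists S. split; [right; exact hS|].
        intros x [<-|hx]; [exact ha | apply hTS, hlT, hx].
      * exists T. split; [exact hT|].
        intros x [<-|hx]; [apply hST, ha | apply hlT, hx].
Qed.

End Tower.

Arguments tower {X} D0 next _.
Arguments bigunion {X} D0 F _.
Arguments tower_union {X D0 next} F _.
Arguments list_in_member {X D0 next} next_inc {F} l.

Definition finitely {X : Type} (q : list X -> Prop) (S : X -> Prop) : Prop :=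
  forall l, (forall x, In x l -> S x) -> q l.

Section Lindenbaum.
Context {X : Type} {q : list X -> Prop}.

Definition grow (S : X -> Prop) : X -> Prop :=
  match excluded_middle_informative (exists x, ~ S x /\ finitely q (insert S x)) with
  | left h => insert S (proj1_sig (constructive_indefinite_description _ h))
  | right _ => S
  end.

Lemma grow_inc S : subset S (grow S).
Proof. unfold grow. destruct excluded_middle_informative; intros x hx; [left|]; exact hx. Qed.

Lemma grow_finitely S : finitely q S -> finitely q (grow S).
Proof.
  unfold grow. destruct excluded_middle_informative as [h|h]; [|auto].
  intros _. exact (proj2 (proj2_sig (constructive_indefinite_description _ h))).
Qed.

Lemma grow_strict {S x} : ~ S x -> finitely q (insert S x) -> exists y, ~ S y /\ grow S y.
Proof.
  intros hx hq. unfold grow.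
  destruct excluded_middle_informative as [h|h]; [|exfalso; apply h; exists x; auto].
  destruct (proj2_sig (constructive_indefinite_description _ h)) as [hy _].
  eexists; split; [exact hy | right; reflexivity].
Qed.

Lemma lindenbaum {D0 : X -> Prop} : finitely q D0 ->
  exists M, subset D0 M /\ finitely q M /\ forall x, finitely q (insert M x) -> M x.
Proof.
  intro hD0.
  assert (htower : forall S, tower D0 grow S -> finitely q S).
  { induction 1 as [|S _ IH|F hF IH].
    - exact hD0.
    - apply grow_finitely, IH.
    - intros l hl. destruct (list_in_member grow_inc l hF hl) as [T [[->|hT] hlT]].
      + apply hD0, hlT.
      + apply (IH T hT), hlT. }
  set (M := bigunion D0 (tower D0 grow)).
  assert (tM : tower D0 grow M) by (apply tower_union; auto).
  exists M. split; [intros x hx; left; exact hx|]. split; [apply htower, tM|].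
  intros x hx. apply NNPP; intro hMx.
  destruct (grow_strict hMx hx) as [y [hMy hy]].
  apply hMy. right. exists (grow M). split; [apply tower_next, tM | exact hy].
Qed.

End Lindenbaum.

Ltac taut :=
  let v := fresh "v" in
  intro v; simpl;
  repeat match goal with
  | |- context [peval v ?x] => destruct (peval v x)
  | |- context [v ?x] => destruct (v x)
  end; reflexivity.

Section Propositional.
Context {P : Type}.
Implicit Types (f g a b : form P) (l : list (form P)) (G : form P -> Prop).

Lemma peval_imp v a b : peval v (Imp a b) = true <-> (peval v a = true -> peval v b = true).
Proof. simpl. destruct (peval v a), (peval v b); simpl; intuition congruence. Qed.

Lemma peval_imps v l f :
  peval v (imps l f) = true <-> ((forall x, In x l -> peval v x = true) -> peval v f = true).
Proof.
  induction l as [|a l IH]; simpl imps.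
  - split; auto.
  - rewrite peval_imp, IH. split.
    + intros h hl. apply h; [apply hl; left; reflexivity | intros x hx; apply hl; right; exact hx].
    + intros h ha hl. apply h. intros x [<-|hx]; auto.
Qed.

Lemma peval_imps_swap v a l f : peval v (Imp a (imps l f)) = peval v (imps l (Imp a f)).
Proof.
  induction l as [|x l IH]; [reflexivity|].
  change (peval v (Imp a (Imp x (imps l f))) = peval v (Imp x (imps l (Imp a f)))).
  simpl in *. rewrite <- IH. destruct (peval v a), (peval v x), (peval v (imps l f)); reflexivity.
Qed.

Lemma thm_imps_mp l f : thm (imps l f) -> (forall x, In x l -> thm x) -> thm f.
Proof.
  revert f. induction l as [|a l IH]; intros f ht hl; [exact ht|].
  apply IH; [| intros x hx; apply hl; right; exact hx].
  apply (MP ht), hl. left; reflexivity.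
Qed.

Lemma thm_taut l {f} : (forall x, In x l -> thm x) -> tautology (imps l f) -> thm f.
Proof. intros hl ht. apply (thm_imps_mp l); [apply AxTaut, ht | exact hl]. Qed.

Lemma deriv_thm G f : thm f -> deriv G f.
Proof. intro h. exists []. split; [intros x [] | exact h]. Qed.

Lemma deriv_mem G f : G f -> deriv G f.
Proof.
  intro h. exists [f]. split; [intros x [<-|[]]; exact h|].
  apply AxTaut. taut.
Qed.

Lemma deriv_mp {G a b} : deriv G (Imp a b) -> deriv G a -> deriv G b.
Proof.
  intros [l1 [hl1 h1]] [l2 [hl2 h2]]. exists (l1 ++ l2). split.
  { intros x hx. apply in_app_or in hx as [hx|hx]; auto. }
  apply (thm_taut [imps l1 (Imp a b); imps l2 a]).
  { intros x [<-|[<-|[]]]; assumption. }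
  intro v. apply peval_imps. intro hprem.
  pose proof (hprem _ (or_introl eq_refl)) as e1.
  pose proof (hprem _ (or_intror (or_introl eq_refl))) as e2.
  apply peval_imps. intro hl.
  assert (hl1' : forall x, In x l1 -> peval v x = true) by (intros; apply hl, in_or_app; auto).
  assert (hl2' : forall x, In x l2 -> peval v x = true) by (intros; apply hl, in_or_app; auto).
  apply (proj1 (peval_imp v a b)).
  - exact (proj1 (peval_imps v l1 _) e1 hl1').
  - exact (proj1 (peval_imps v l2 _) e2 hl2').
Qed.

Lemma deriv_taut {G} l f : (forall x, In x l -> deriv G x) -> tautology (imps l f) -> deriv G f.
Proof.
  revert f. induction l as [|a l IH]; intros f hl ht.
  - apply deriv_thm, AxTaut, ht.
  - apply (deriv_mp (a := a)); [| apply hl; left; reflexivity].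
    apply IH; [intros x hx; apply hl; right; exact hx|].
    intro v. rewrite <- peval_imps_swap. apply ht.
Qed.

Lemma deduction G a b : deriv (insert G a) b -> deriv G (Imp a b).
Proof.
  intros [l [hl ht]]. revert b ht. induction l as [|x l IH]; intros b ht.
  - apply (deriv_taut [b]); [intros y [<-|[]]; apply deriv_thm, ht | taut].
  - assert (ht' : thm (imps l (Imp x b))).
    { apply (thm_taut [Imp x (imps l b)]); [intros y [<-|[]]; exact ht|].
      intro v. simpl. rewrite <- peval_imps_swap. simpl.
      destruct (peval v (imps l b)), (peval v x); reflexivity. }
    specialize (IH (fun y hy => hl y (or_intror hy)) _ ht').
    destruct (hl x (or_introl eq_refl)) as [hx| ->].
    + apply (deriv_taut [Imp a (Imp x b); x]); [|taut].
      intros y [<-|[<-|[]]]; [exact IH | apply deriv_mem, hx].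
    + apply (deriv_taut [Imp a (Imp a b)]); [intros y [<-|[]]; exact IH | taut].
Qed.

End Propositional.

(* Consistency and maximal consistent sets; falsum is written with a fixed
   atom p0, which is why the language must have an atom. *)
Section Maximal.
Context {P : Type} (p0 : P).
Implicit Types (f g a b : form P) (l : list (form P)) (G w : form P -> Prop).

Definition bot : form P := Neg (Top p0).
Definition consis G : Prop := ~ deriv G bot.
Definition mcs w : Prop := consis w /\ forall x, consis (insert w x) -> w x.

Lemma consis_insert G a : ~ deriv G (Neg a) -> consis (insert G a).
Proof.
  intros hG h. apply hG.
  apply (deriv_taut [Imp a bot]); [intros y [<-|[]]; apply deduction, h | taut].
Qed.

Lemma lindenbaum_mcs {G} : consis G -> exists w, mcs w /\ subset G w.
Proof.
  intro hG.
  assert (equiv : forall S, consis S <-> finitely (fun l => ~ thm (imps l bot)) S).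
  { intro S. split.
    - intros hS l hl ht. apply hS. exists l; auto.
    - intros hS [l [hl ht]]. exact (hS l hl ht). }
  destruct (lindenbaum (proj1 (equiv G) hG)) as [w [hGw [hw hmax]]].
  exists w. split; [split|exact hGw].
  - apply equiv, hw.
  - intros x hx. apply hmax, equiv, hx.
Qed.

(* The core of w: what every successor of w will be required to contain. *)
Definition core w (psi : form P) : Prop :=
  forall chi, w (Neg (Dot chi)) -> w (Dot psi) /\ w (Dot (Or psi chi)).

Section MaximalSet.
Context {w : form P -> Prop} (Hw : mcs w).

Lemma mcs_deriv f : deriv w f -> w f.
Proof.
  intro hf. apply (proj2 Hw), consis_insert. intro hn. apply (proj1 Hw).
  apply (deriv_taut [f; Neg f]); [intros y [<-|[<-|[]]]; assumption | taut].
Qed.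

Lemma mcs_taut l f : (forall x, In x l -> w x) -> tautology (imps l f) -> w f.
Proof.
  intros hl ht. apply mcs_deriv, (deriv_taut l); [|exact ht].
  intros x hx. apply deriv_mem, hl, hx.
Qed.

Lemma mcs_thm {f} : thm f -> w f.
Proof. intro h. apply mcs_deriv, deriv_thm, h. Qed.

Lemma mcs_mp a b : thm (Imp a b) -> w a -> w b.
Proof. intros h ha. apply mcs_deriv, (deriv_mp (a := a)); [apply deriv_thm, h | apply deriv_mem, ha]. Qed.

Lemma mcs_neg a : w (Neg a) <-> ~ w a.
Proof.
  split.
  - intros hn ha. apply (proj1 Hw).
    apply (deriv_taut [a; Neg a]); [intros y [<-|[<-|[]]]; apply deriv_mem; assumption | taut].
  - intro ha. apply (proj2 Hw), consis_insert. intro hnn. apply ha, mcs_deriv.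
    apply (deriv_taut [Neg (Neg a)]); [intros y [<-|[]]; exact hnn | taut].
Qed.

Lemma mcs_and a b : w (And a b) <-> w a /\ w b.
Proof.
  split.
  - intro h. split; apply (mcs_taut [And a b]); try (intros y [<-|[]]; exact h); taut.
  - intros [ha hb]. apply (mcs_taut [a; b]); [intros y [<-|[<-|[]]]; assumption | taut].
Qed.

Lemma mcs_or a b : w (Or a b) -> w a \/ w b.
Proof.
  intro h. destruct (classic (w a)) as [ha|ha]; [left; exact ha | right].
  apply (mcs_taut [Or a b; Neg a]); [|taut].
  intros y [<-|[<-|[]]]; [exact h | apply mcs_neg, ha].
Qed.

Lemma dot_re {a b} : w (Dot a) -> thm (Iff a b) -> w (Dot b).
Proof. intros ha h. apply (mcs_taut [Iff (Dot a) (Dot b); Dot a]); [|taut].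
  intros y [<-|[<-|[]]]; [apply mcs_thm, RE, h | exact ha]. Qed.

Lemma dot_neg a : w (Dot a) <-> w (Dot (Neg a)).
Proof.
  pose proof (mcs_thm (AxNeg a)) as hax.
  split; intro h; [apply (mcs_taut [Iff (Dot a) (Dot (Neg a)); Dot a])
                  |apply (mcs_taut [Iff (Dot a) (Dot (Neg a)); Dot (Neg a)])];
  try (intros y [<-|[<-|[]]]; assumption); taut.
Qed.

Lemma dot_and {a b} : w (Dot a) -> w (Dot b) -> w (Dot (And a b)).
Proof.
  intros ha hb. apply (mcs_taut [Imp (And (Dot a) (Dot b)) (Dot (And a b)); Dot a; Dot b]); [|taut].
  intros y [<-|[<-|[<-|[]]]]; [apply mcs_thm, AxAnd | exact ha | exact hb].
Qed.

Lemma dot_or f g h : w (Dot f) -> w (Dot (Or f g)) \/ w (Dot (Or (Neg f) h)).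
Proof. intro hf. apply mcs_or, (mcs_mp (Dot f)); [apply AxOr | exact hf]. Qed.

Lemma dot_cases {a c} : w (Dot (Or a c)) -> w (Dot (Or (Neg a) c)) -> w (Dot c).
Proof. intros h1 h2. apply (dot_re (dot_and h1 h2)), AxTaut. taut. Qed.

Lemma core_intro {a chi} : w (Neg (Dot chi)) -> w (Dot a) -> w (Dot (Or a chi)) -> core w a.
Proof.
  intros hc ha hac chi' _. split; [exact ha|].
  destruct (dot_or a chi' chi ha) as [h|h]; [exact h|].
  exfalso. apply (proj1 (mcs_neg _) hc), (dot_cases hac h).
Qed.

Lemma core_mono {a b} : thm (Imp a b) -> core w a -> core w b.
Proof.
  intros hab hx chi hc. destruct (hx chi hc) as [ha hac].
  assert (hnot : ~ w (Dot (Or (Neg a) chi))).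
  { intro h. apply (proj1 (mcs_neg _) hc), (dot_cases hac h). }
  split.
  - destruct (dot_or a b chi ha) as [h|h]; [|contradiction].
    apply (dot_re h), (thm_taut [Imp a b]); [intros y [<-|[]]; exact hab | taut].
  - destruct (dot_or (Or a chi) (Or b chi) chi hac) as [h|h].
    + apply (dot_re h), (thm_taut [Imp a b]); [intros y [<-|[]]; exact hab | taut].
    + exfalso. apply hnot, (dot_re h), AxTaut. taut.
Qed.

Lemma core_and {a b} : core w a -> core w b -> core w (And a b).
Proof.
  intros ha hb chi hc. destruct (ha chi hc) as [h1 h2], (hb chi hc) as [h3 h4].
  split; [apply dot_and; assumption|].
  apply (dot_re (dot_and h2 h4)), AxTaut. taut.
Qed.

Lemma core_thm {f} : thm f -> core w f.
Proof.
  intros hf chi _. pose proof (mcs_thm (AxTop p0)) as htop.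
  split; apply (dot_re htop), (thm_taut [f]); try (intros y [<-|[]]; exact hf); taut.
Qed.

Lemma core_mp {a b} : core w (Imp a b) -> core w a -> core w b.
Proof. intros hab ha. apply (core_mono (a := And (Imp a b) a)); [apply AxTaut; taut | apply core_and; assumption]. Qed.

Lemma core_deriv {f} : deriv (core w) f -> core w f.
Proof.
  intros [l [hl ht]]. apply core_thm in ht. revert f ht.
  induction l as [|a l IH]; intros f ht; [exact ht|].
  apply IH; [intros x hx; apply hl; right; exact hx|].
  apply (core_mp ht), hl. left; reflexivity.
Qed.

End MaximalSet.

Definition succ w t : Prop := (exists chi, w (Neg (Dot chi))) /\ subset (core w) t.

Lemma succ_agree {w t u a} : mcs w -> mcs t -> mcs u -> w (Dot a) ->
  succ w t -> succ w u -> (t a <-> u a).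
Proof.
  intros Hw Ht Hu hd [[chi hc] ht] [_ hu].
  destruct (dot_or Hw a chi chi hd) as [h|h].
  - pose proof (core_intro Hw hc hd h) as hcore. split; intros _; [apply hu | apply ht]; exact hcore.
  - pose proof (core_intro Hw hc (proj1 (dot_neg Hw a) hd) h) as hcore.
    pose proof (proj1 (mcs_neg Ht a) (ht _ hcore)). pose proof (proj1 (mcs_neg Hu a) (hu _ hcore)).
    tauto.
Qed.

Lemma succ_disagree {w a} : mcs w -> ~ w (Dot a) ->
  exists t u, mcs t /\ mcs u /\ succ w t /\ succ w u /\ t a /\ ~ u a.
Proof.
  intros Hw hd. assert (hna : w (Neg (Dot a))) by (apply (mcs_neg Hw), hd).
  assert (hpos : consis (insert (core w) a)).
  { apply consis_insert. intro h. apply hd, (dot_neg Hw).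
    exact (proj1 (core_deriv Hw h a hna)). }
  assert (hneg : consis (insert (core w) (Neg a))).
  { apply consis_insert. intro h. apply hd.
    refine (proj1 (core_mono Hw (a := Neg (Neg a)) _ (core_deriv Hw h) a hna)).
    apply AxTaut. taut. }
  destruct (lindenbaum_mcs hpos) as [t [Ht st]], (lindenbaum_mcs hneg) as [u [Hu su]].
  assert (rt : succ w t) by (split; [exists a; exact hna | intros psi hp; apply st; left; exact hp]).
  assert (ru : succ w u) by (split; [exists a; exact hna | intros psi hp; apply su; left; exact hp]).
  exists t, u. do 4 (split; [assumption|]). split.
  - apply st; right; reflexivity.
  - apply (mcs_neg Hu), su. right; reflexivity.
Qed.

Definition canonical : model P :=
  {| st := {w : form P -> Prop | mcs w};
     R1 := fun s t => succ (proj1_sig s) (proj1_sig t);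
     R2 := fun s t => succ (proj1_sig s) (proj1_sig t);
     V := fun p s => proj1_sig s (Atom p) |}.

Lemma truth f (s : st canonical) : sat canonical s f <-> proj1_sig s f.
Proof.
  revert s. induction f as [p|a IH|a IHa b IHb|a IH]; intros [w Hw]; simpl.
  - reflexivity.
  - rewrite (IH (exist _ w Hw)), (mcs_neg Hw a). reflexivity.
  - rewrite (IHa (exist _ w Hw)), (IHb (exist _ w Hw)), (mcs_and Hw a b). reflexivity.
  - split.
    + intro hsat. apply NNPP; intro hd.
      destruct (succ_disagree Hw hd) as [t [u [Ht [Hu [rt [ru [ta ua]]]]]]].
      specialize (hsat (exist _ t Ht) (exist _ u Hu) rt ru).
      rewrite (IH (exist _ t Ht)), (IH (exist _ u Hu)) in hsat. tauto.
    + intros hd [t Ht] [u Hu] rt ru.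
      rewrite (IH (exist _ t Ht)), (IH (exist _ u Hu)).
      exact (succ_agree Hw Ht Hu hd rt ru).
Qed.

End Maximal.

Section Soundness.
Context {P : Type} {M : model P}.
Implicit Types (f g h a b : form P) (s : st M).

Lemma sat_imp s a b : sat M s (Imp a b) <-> (sat M s a -> sat M s b).
Proof. simpl. split; [intros hn ha; apply NNPP; intro hb; auto | intros hab [ha hb]; auto]. Qed.

Lemma sat_or s a b : sat M s (Or a b) <-> sat M s a \/ sat M s b.
Proof. simpl. destruct (classic (sat M s a)), (classic (sat M s b)); tauto. Qed.

Lemma sat_iff s a b : sat M s (Iff a b) <-> (sat M s a <-> sat M s b).
Proof.
  change (sat M s (Imp a b) /\ sat M s (Imp b a) <-> (sat M s a <-> sat M s b)).
  rewrite !sat_imp. tauto.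
Qed.

(* Truth at a state is a Boolean valuation, so tautologies are valid. *)
Definition truth_val s f : bool :=
  if excluded_middle_informative (sat M s f) then true else false.

Lemma peval_truth_val s f : peval (truth_val s) f = true <-> sat M s f.
Proof.
  induction f as [p|a IH|a IHa b IHb|a]; simpl;
    try (unfold truth_val; destruct excluded_middle_informative; intuition congruence).
  - rewrite <- IH. destruct (peval (truth_val s) a); simpl; intuition congruence.
  - rewrite andb_true_iff, IHa, IHb. reflexivity.
Qed.

Lemma dot_uniform {s f} : sat M s (Dot f) ->
  (forall t u, R1 M s t -> R2 M s u -> sat M t f /\ sat M u f) \/
  (forall t u, R1 M s t -> R2 M s u -> ~ sat M t f /\ ~ sat M u f).
Proof.
  intro hd. destruct (classic (exists t0 u0, R1 M s t0 /\ R2 M s u0)) as [[t0 [u0 [h1 h2]]]|hno].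
  - destruct (classic (sat M t0 f)) as [hf|hf]; [left|right]; intros t u ht hu;
      pose proof (hd t u0 ht h2); pose proof (hd t0 u0 h1 h2); pose proof (hd t0 u h1 hu); tauto.
  - left. intros t u ht hu. exfalso. apply hno. eauto.
Qed.

Lemma thm_sound f : thm f -> forall s, sat M s f.
Proof.
  induction 1 as [f ht|p|f|f g|f g h|f g _ IH1 _ IH2|f g _ IH]; intro s.
  - apply peval_truth_val, ht.
  - simpl. tauto.
  - apply sat_iff. simpl. split; intros hd t u ht hu; specialize (hd t u ht hu);
      destruct (classic (sat M t f)), (classic (sat M u f)); tauto.
  - apply sat_imp. simpl. intros [hf hg] t u ht hu.
    specialize (hf t u ht hu). specialize (hg t u ht hu). tauto.
  - apply sat_imp. intro hd. apply sat_or.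
    destruct (dot_uniform hd) as [hu|hu]; [left|right]; intros t u ht hu';
      specialize (hu t u ht hu'); rewrite !sat_or; simpl; tauto.
  - exact (proj1 (sat_imp s f g) (IH1 s) (IH2 s)).
  - apply sat_iff. simpl. split; intros hd t u ht hu; specialize (hd t u ht hu);
      pose proof (proj1 (sat_iff t f g) (IH t)); pose proof (proj1 (sat_iff u f g) (IH u)); tauto.
Qed.

Lemma sat_imps s l f : sat M s (imps l f) -> (forall x, In x l -> sat M s x) -> sat M s f.
Proof.
  induction l as [|a l IH]; simpl imps; intros h hl; [exact h|].
  apply IH; [| intros x hx; apply hl; right; exact hx].
  apply (proj1 (sat_imp s a _) h), hl. left; reflexivity.
Qed.

End Soundness.

Theorem theorem7 (P : Type) (HP : inhabited P) (Gamma : form P -> Prop) (phi : form P) :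
  deriv Gamma phi <->
  (forall (M : model P) (s : st M),
      (forall g, Gamma g -> sat M s g) -> sat M s phi).
Proof.
  split.
  - intros [l [hl ht]] M s hG.
    apply (sat_imps s l); [apply thm_sound, ht | intros x hx; apply hG, hl, hx].
  - intros hvalid. destruct HP as [p0]. apply NNPP; intro hnd.
    assert (hc : consis p0 (insert Gamma (Neg phi))).
    { apply consis_insert. intro hnn. apply hnd.
      apply (deriv_taut [Neg (Neg phi)]); [intros y [<-|[]]; exact hnn | taut]. }
    destruct (lindenbaum_mcs p0 hc) as [w [Hw hsub]].
    pose (s := exist (mcs p0) w Hw : st (canonical p0)).
    assert (hphi : w phi).
    { apply (truth p0 phi s), hvalid. intros g hg. apply (truth p0 g s), hsub. left; exact hg. }
    apply (proj1 (mcs_neg p0 Hw phi) (hsub _ (or_intror eq_refl)) hphi).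
Qed.
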